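(* Let $f:X\to Y$ be a continuous map between metric spaces, with $X$ complete. If $f$ has the bounded path-lifting property for every rectifiable path $p:[0,1]\to Y$, then $f$ has the continuation property for every rectifiable path $p:[0,1]\to Y$. Consequently, if in addition $Y$ is path-connected and locally $\mathcal R$-contractible and $f$ is a local homeomorphism, then $f$ is a covering projection.
   Context: Length of a path $p:[a,b]\to Y$: $\ell(p)=\sup\sum_{i}d(p(t_i),p(t_{i+1}))$ over partitions of $[a,b]$; $p$ is rectifiable if $\ell(p)<\infty$. $\mathcal R$ denotes the family of all rectifiable paths $[0,1]\to Y$. $Y$ is locally $\mathcal R$-contractible if every $y_0\in Y$ has an open neighborhood $U$ with a continuous homotopy $H:U\times[0,1]\to U$ such that $H(y_0,t)=y_0$ for all $t$, $H(y,0)=y_0$, $H(y,1)=y$ for all $y\in U$, and each path $t\mapsto H(y,t)$ is rectifiable. For non-isolated $x\in X$, $D_x^-f=\liminf_{z\to x,\,z\neq x}\frac{d(f(z),f(x))}{d(z,x)}$; $X$ is assumed to have no isolated points. $f$ has the continuation property for $p:[0,1]\to Y$ if for every $b\in(0,1]$ and every continuous $q:[0,b)\to X$ with $f\circ q=p$ on $[0,b)$ there is a sequence $t_n\to b$ in $[0,b)$ with $(q(t_n))$ convergent in $X$. $f$ has the bounded path-lifting property for $p:[0,1]\to Y$ if for every $b\in(0,1]$ and every continuous $q:[0,b)\to X$ with $f\circ q=p$ on $[0,b)$ there exists $\alpha>0$ with $\inf\{D_x^-f:x\in\operatorname{Im}q\}\ge\alpha$. *)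

From HB Require Import structures.
From mathcomp Require Import all_boot all_order all_algebra.
From mathcomp Require Import all_classical all_reals all_analysis.

Set Implicit Arguments.
Unset Strict Implicit.
Unset Printing Implicit Defensive.

Import Order.TTheory GRing.Theory Num.Theory.
Import numFieldTopology.Exports.
Local Open Scope classical_set_scope.
Local Open Scope ring_scope.

Section Defs.
Context {R : realType}.

Definition complete_metric (X : metricType R) : Prop :=
  forall u : nat -> X,
    (forall e : R, 0 < e -> exists N : nat,
        forall m n : nat, (N <= m)%N -> (N <= n)%N -> mdist (u m) (u n) < e) ->
    exists x : X, u @ \oo --> x.

Definition no_isolated_points (X : metricType R) : Prop :=
  forall (x : X) (r : R), 0 < r -> exists z : X, z <> x /\ mdist z x < r.

(** [s] lists the partition points after [a]: a = t_0 <= t_1 <= ... <= t_n = b,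
    with s = [:: t_1; ...; t_n]. *)
Definition partition_of (a b : R) (s : seq R) : Prop :=
  sorted <=%R (a :: s) /\ last a s = b.

Definition partition_sum {Y : metricType R} (p : R -> Y) (a : R) (s : seq R) : R :=
  \sum_(i < size s) mdist (p (nth a (a :: s) i)) (p (nth a s i)).

Definition path_length {Y : metricType R} (p : R -> Y) (a b : R) : \bar R :=
  ereal_sup [set (partition_sum p a s)%:E | s in [set s | partition_of a b s]].

Definition rectifiable {Y : metricType R} (p : R -> Y) : Prop :=
  {within `[0, 1], continuous p} /\ (path_length p 0 1 < +oo)%E.

(** D_x^- f = liminf_{z -> x, z <> x} d(f z, f x) / d(z, x), written as
    sup_{r > 0} inf_{0 < d(z,x) < r} d(f z, f x) / d(z, x). *)
Definition lower_scaling {X Y : metricType R} (f : X -> Y) (x : X) : \bar R :=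
  ereal_sup [set ereal_inf
      [set (mdist (f z) (f x) / mdist z x)%:E
        | z in [set z | 0 < mdist z x < r]]
    | r in [set r : R | 0 < r]].

Definition continuation_property {X Y : metricType R} (f : X -> Y) (p : R -> Y) : Prop :=
  forall b : R, 0 < b <= 1 ->
  forall q : R -> X, {within `[0, b[, continuous q} ->
    (forall t, 0 <= t < b -> f (q t) = p t) ->
    exists tn : nat -> R, (forall n, 0 <= tn n < b) /\ tn @ \oo --> b /\
      exists x : X, (q \o tn) @ \oo --> x.

Definition bounded_path_lifting_property {X Y : metricType R} (f : X -> Y) (p : R -> Y)
  : Prop :=
  forall b : R, 0 < b <= 1 ->
  forall q : R -> X, {within `[0, b[, continuous q} ->
    (forall t, 0 <= t < b -> f (q t) = p t) ->
    exists alpha : R, 0 < alpha /\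
      (alpha%:E <= ereal_inf [set lower_scaling f x | x in q @` `[0%R, b[])%E.

Definition path_connected_space (Y : metricType R) : Prop :=
  forall y1 y2 : Y, exists g : R -> Y,
    {within `[0, 1], continuous g} /\ g 0 = y1 /\ g 1 = y2.

Definition locally_R_contractible (Y : metricType R) : Prop :=
  forall y0 : Y, exists U : set Y, open U /\ U y0 /\
    exists H : Y * R -> Y,
      {within U `*` `[0, 1], continuous H} /\
      (forall y t, U y -> 0 <= t <= 1 -> U (H (y, t))) /\
      (forall t, 0 <= t <= 1 -> H (y0, t) = y0) /\
      (forall y, U y -> H (y, 0) = y0) /\
      (forall y, U y -> H (y, 1) = y) /\
      (forall y, U y -> rectifiable (fun t => H (y, t))).

Definition homeo_onto {X Y : metricType R} (f : X -> Y) (U : set X) (V : set Y) : Prop :=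
  f @` U = V /\ {within U, continuous f} /\ {in U &, injective f} /\
  exists g : Y -> X, {within V, continuous g} /\ (forall x, U x -> g (f x) = x).

Definition local_homeomorphism {X Y : metricType R} (f : X -> Y) : Prop :=
  forall x : X, exists U : set X, open U /\ U x /\ open (f @` U) /\
    homeo_onto f U (f @` U).

Definition evenly_covered {X Y : metricType R} (f : X -> Y) (V : set Y) : Prop :=
  exists Us : set (set X),
    (forall U, Us U -> open U /\ homeo_onto f U V) /\
    (forall U U', Us U -> Us U' -> U <> U' -> U `&` U' = set0) /\
    f @^-1` V = \bigcup_(U in Us) U.

Definition covering_projection {X Y : metricType R} (f : X -> Y) : Prop :=
  continuous f /\
  forall y : Y, exists V : set Y, open V /\ V y /\ evenly_covered f V.

End Defs.

(* If D^- f >= a > 0 along a lift q of a rectifiable path p, then near each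
   point of q the map f expands distances by a factor a/2, and real induction
   turns this into (a/2) d(q s, q t) <= l(p|[s,t]).  As the arc length of p
   converges at the end of the interval, q is Cauchy along any sequence of
   times increasing to it, so it converges in the complete space X.

   For a local homeomorphism, lifts of paths are unique as f is locally
   injective, and the continuation property makes lifts of rectifiable paths
   exist: at a left limit point of a lift, a local section of f around a
   cluster value extends it.  Given a rectifiable contraction H of a
   neighbourhood U of y0, the sheet through x in f^-1(y0) is the set of
   endpoints of the lifts from x of the paths t |-> H(y, t), y in U.  These
   endpoints depend continuously on y, so each sheet is open and mapped
   homeomorphically onto U; lifting the reversed paths shows that the sheets
   are disjoint and cover f^-1(U). *)

From HB Require Import structures.
From mathcomp Require Import all_boot all_order all_algebra.
From mathcomp Require Import all_classical all_reals all_analysis.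
From mathcomp Require Import lra ring.

Import Order.TTheory GRing.Theory Num.Theory.
Import numFieldTopology.Exports.
Local Open Scope classical_set_scope.
Local Open Scope ring_scope.

Section ContinuousOn.
Context {R : realType}.

Definition continuous_within_at {T U : pseudoMetricType R} (A : set T) (f : T -> U) x :=
  forall e, 0 < e -> exists2 d, 0 < d & forall y, A y -> ball x d y -> ball (f x) e (f y).

Definition continuous_on {T U : pseudoMetricType R} (A : set T) (f : T -> U) :=
  forall x, A x -> continuous_within_at A f x.

Lemma continuous_onP {T U : pseudoMetricType R} (A : set T) (f : T -> U) :
  {within A, continuous f} <-> continuous_on A f.
Proof.
rewrite subspace_continuousP; split.
- move=> H x Ax e e0.
  have /nbhs_ballP [d /= d0 Hd] := H x Ax (ball (f x) e) (nbhsx_ballx _ _ e0).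
  by exists d => // y Ay bxy; exact: (Hd y bxy Ay).
- move=> H x Ax P /nbhs_ballP [e /= e0 He].
  have [d d0 Hd] := H x Ax e e0.
  by apply/nbhs_ballP; exists d => //= y bxy Ay; exact: He (Hd y Ay bxy).
Qed.

Lemma ball_normR (x y e : R) : ball x e y <-> `|x - y| < e.
Proof. by rewrite -ball_normE. Qed.

Lemma ball_mdist {T : metricType R} (x y : T) e : ball x e y <-> mdist x y < e.
Proof. by rewrite ballEmdist. Qed.

Definition Icc (a c : R) := [set t : R | a <= t <= c].
Definition Ico (a c : R) := [set t : R | a <= t < c].

Lemma set_itv_ccE a c : `[a, c]%classic = Icc a c.
Proof. by apply/funext => t; rewrite /= in_itv. Qed.

Lemma set_itv_coE a c : `[a, c[%classic = Ico a c.
Proof. by apply/funext => t; rewrite /= in_itv. Qed.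

Section Operations.
Context {T U V : pseudoMetricType R}.

Lemma continuous_onS {A B : set T} {f : T -> U} :
  B `<=` A -> continuous_on A f -> continuous_on B f.
Proof.
move=> BA H x Bx e e0; have [d d0 Hd] := H x (BA _ Bx) e e0.
by exists d => // y By; apply: Hd; apply: BA.
Qed.

Lemma continuous_on_comp {A : set T} {B : set U} {f : T -> U} {g : U -> V} :
  continuous_on A f -> continuous_on B g -> (forall x, A x -> B (f x)) ->
  continuous_on A (g \o f).
Proof.
move=> cf cg AB x Ax e e0.
have [d1 d10 H1] := cg (f x) (AB x Ax) e e0.
have [d2 d20 H2] := cf x Ax d1 d10.
by exists d2 => // y Ay bxy; apply: H1; [apply: AB | apply: H2].
Qed.

Lemma continuous_on_ext {A : set T} {f g : T -> U} :
  (forall x, A x -> f x = g x) -> continuous_on A f -> continuous_on A g.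
Proof.
move=> fg H x Ax e e0; have [d d0 Hd] := H x Ax e e0.
by exists d => // y Ay bxy; rewrite -!fg //; apply: Hd.
Qed.

Lemma continuous_on_cst (A : set T) (c : U) : continuous_on A (fun=> c).
Proof. by move=> x _ e e0; exists 1 => // y _ _; exact: ballxx. Qed.

End Operations.

Section Interval.
Context {U : pseudoMetricType R}.

Lemma continuous_on_glue (a m c : R) (q1 q2 : R -> U) :
  a <= m -> m <= c -> continuous_on (Icc a m) q1 -> continuous_on (Icc m c) q2 ->
  q1 m = q2 m -> continuous_on (Icc a c) (fun t => if t <= m then q1 t else q2 t).
Proof.
move=> am mc c1 c2 e12 x /andP[ax xc] e e0.
have [xm|mx|->] := ltgtP x m.
- have [d d0 Hd] := c1 x (introT andP (conj ax (ltW xm))) e e0.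
  exists (Num.min d (m - x)); first by rewrite lt_min d0 subr_gt0 xm.
  move=> y /andP[ay yc] /ball_normR; rewrite lt_min => /andP[h1 h2].
  have ym : y <= m by move: h2; rewrite ltr_norml; lra.
  by rewrite ym; apply: Hd; [rewrite /Icc /= ay ym | exact/ball_normR].
- have [d d0 Hd] := c2 x (introT andP (conj (ltW mx) xc)) e e0.
  exists (Num.min d (x - m)); first by rewrite lt_min d0 subr_gt0 mx.
  move=> y /andP[ay yc] /ball_normR; rewrite lt_min => /andP[h1 h2].
  have ym : m < y by move: h2; rewrite ltr_norml; lra.
  rewrite leNgt ym /=; apply: Hd; last exact/ball_normR.
  by rewrite /Icc /= (ltW ym) yc.
- have [d1 d10 Hd1] := c1 m (introT andP (conj am (lexx m))) e e0.
  have [d2 d20 Hd2] := c2 m (introT andP (conj (lexx m) mc)) e e0.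
  exists (Num.min d1 d2); first by rewrite lt_min d10 d20.
  move=> y /andP[ay yc] /ball_normR; rewrite lt_min => /andP[h1 h2].
  case: ifP => ym; first by apply: Hd1; [rewrite /Icc /= ay ym | exact/ball_normR].
  rewrite e12; apply: Hd2; last exact/ball_normR.
  by rewrite /Icc /= yc andbT ltW // ltNge ym.
Qed.

Lemma continuous_on_Ico (a u : R) (q : R -> U) :
  (forall w, a <= w < u -> continuous_on (Icc a w) q) -> continuous_on (Ico a u) q.
Proof.
move=> cq t /andP[ta tu] e e0.
pose w := (t + u) / 2.
have [d d0 Hd] := cq w ltac:(apply/andP; split; rewrite /w; lra) t
  ltac:(apply/andP; split; rewrite /w; lra) e e0.
exists (Num.min d (w - t)); first by rewrite lt_min d0 /w; lra.
move=> y /andP[ay yu] /ball_normR; rewrite lt_min => /andP[h1 h2].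
apply: Hd; last exact/ball_normR.
by apply/andP; split => //; move: h2; rewrite ltr_norml; lra.
Qed.

Lemma continuous_on_rev01 {q : R -> U} :
  continuous_on (Icc 0 1) q -> continuous_on (Icc 0 1) (fun t => q (1 - t)).
Proof.
move=> cq x /andP[x0 x1] e e0.
have [d d0 Hd] := cq (1 - x) ltac:(apply/andP; split; lra) e e0.
exists d => // y /andP[y0 y1] /ball_normR hy; apply: Hd.
  by apply/andP; split; lra.
by apply/ball_normR; rewrite (_ : 1 - x - (1 - y) = y - x) 1?distrC //; ring.
Qed.

End Interval.

Lemma real_induction (s t : R) (P : R -> Prop) : s <= t -> P s ->
  (forall u, s < u <= t -> (forall w, s <= w < u -> P w) -> P u) ->
  (forall u, s <= u < t -> P u ->
     exists2 e, 0 < e & forall w, u < w < u + e -> w <= t -> P w) ->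
  forall w, s <= w <= t -> P w.
Proof.
move=> st Ps closed step.
pose A := [set u | s <= u <= t /\ forall w, s <= w <= u -> P w].
have As : A s.
  split; first by rewrite lexx st.
  by move=> w /andP[sw ws]; have -> : w = s by apply/eqP; rewrite eq_le ws sw.
have ubA : ubound A t by move=> u [/andP[_ ->]].
have hs : has_sup A by split; [exists s | exists t].
pose m := sup A.
have sm : s <= m by exact: sup_upper_bound.
have mt : m <= t by apply: ge_sup => //; exists s.
have below w : s <= w < m -> P w.
  move=> /andP[sw wm].
  have [u [_ Pu] wu] := sup_adherent (ltac:(by rewrite subr_gt0) : 0 < m - w) hs.
  by apply: Pu; apply/andP; split => //; move: wu; rewrite /m; lra.
have Pm : P m.
  move: sm; rewrite le_eqVlt => /orP[/eqP <- // | sm].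
  by apply: closed => //; rewrite sm mt.
have Am w : s <= w <= m -> P w.
  move=> /andP[sw]; rewrite le_eqVlt => /orP[/eqP -> // | wm].
  by apply: below; rewrite sw wm.
suff mt' : m = t by rewrite -mt'.
apply/eqP; rewrite eq_le mt leNgt; apply/negP => mt'.
have [e e0 He] := step m (introT andP (conj sm mt')) Pm.
pose v := Num.min (m + e / 2) t.
have Av : A v.
  split; first by rewrite /v le_min ge_min lexx orbT andbT; apply/andP; split; lra.
  move=> w /andP[sw wv]; have [wm | mw] := leP w m; first by apply: Am; rewrite sw wm.
  by apply: He; move: wv; rewrite /v le_min => /andP[]; lra.
have := sup_upper_bound hs Av; rewrite -/m /v ge_min.
by case/orP; lra.
Qed.


Section MetricFacts.
Context {T : pseudoMetricType R} {U : metricType R}.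

Lemma open_mdistP (S : set U) :
  open S <-> forall z, S z -> exists2 r, 0 < r & forall z', mdist z z' < r -> S z'.
Proof.
split=> [oS z Sz | H].
  have /nbhs_ballP [r r0 Hr] : nbhs z S by exact: open_nbhs_nbhs.
  by exists r => // z' /ball_mdist; exact: Hr.
rewrite openE => z Sz; apply/nbhs_ballP.
by have [r r0 Hr] := H z Sz; exists r => // z' /ball_mdist; exact: Hr.
Qed.

Lemma continuous_on_nbhs {A : set T} {h : T -> U} {O : set U} {x} :
  continuous_on A h -> A x -> open O -> O (h x) ->
  exists2 d, 0 < d & forall y, A y -> ball x d y -> O (h y).
Proof.
move=> ch Ax /open_mdistP oO Ohx; have [r r0 Hr] := oO _ Ohx.
have [d d0 Hd] := ch x Ax r r0.
by exists d => // y Ay bxy; apply: Hr; apply/ball_mdist; exact: Hd.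
Qed.

Lemma continuous_on_eq_left {a c u : R} {q1 q2 : R -> U} :
  continuous_on (Icc a c) q1 -> continuous_on (Icc a c) q2 -> a < u <= c ->
  (forall w, a <= w < u -> q1 w = q2 w) -> q1 u = q2 u.
Proof.
move=> c1 c2 /andP[au uc] eq12.
have hu : Icc a c u by apply/andP; split; lra.
apply: mdist_positivity; apply/eqP; rewrite eq_le mdist_ge0 andbT.
apply/ler_addgt0Pr => e e0; rewrite add0r.
have [d1 d10 H1] := c1 u hu _ (divr_gt0 e0 (ltr0n R 2)).
have [d2 d20 H2] := c2 u hu _ (divr_gt0 e0 (ltr0n R 2)).
pose d := Num.min d1 d2; pose w := Num.max a (u - d / 2).
have d0 : 0 < d by rewrite lt_min d10 d20.
have dd1 : d <= d1 by rewrite ge_min lexx.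
have dd2 : d <= d2 by rewrite ge_min lexx orbT.
have aw : a <= w by rewrite le_max lexx.
have wu : w < u by rewrite gt_max au /=; lra.
have uw : u - d / 2 <= w by rewrite le_max lexx orbT.
have hw : Icc a c w by apply/andP; split; lra.
have /ball_mdist b1 : ball (q1 u) (e / 2) (q1 w).
  by apply: H1 => //; apply/ball_normR; rewrite ger0_norm; lra.
have /ball_mdist b2 : ball (q2 u) (e / 2) (q2 w).
  by apply: H2 => //; apply/ball_normR; rewrite ger0_norm; lra.
have := metric_triangle (q1 u) (q1 w) (q2 u).
rewrite (eq12 w) ?aw ?wu // in b1 *; rewrite (metric_sym (q2 w)); lra.
Qed.

End MetricFacts.

End ContinuousOn.

Section ArcLength.
Context {R : realType} {Y : metricType R}.
Implicit Types (p : R -> Y) (s : seq R).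

Lemma partition_sum_rcons p a s v : partition_sum p a (rcons s v) =
  partition_sum p a s + mdist (p (last a s)) (p v).
Proof.
rewrite /partition_sum size_rcons big_ord_recr /=; congr (_ + _).
  apply: eq_bigr => i _ /=.
  by rewrite -rcons_cons !nth_rcons /= ltnS (ltnW (ltn_ord i)) (ltn_ord i).
by rewrite -rcons_cons !nth_rcons /= ltnn eqxx ltnS leqnn (last_nth a).
Qed.

Lemma path_length_rcons p a u v : u <= v ->
  (path_length p a u + (mdist (p u) (p v))%:E <= path_length p a v)%E.
Proof.
move=> uv; rewrite -leeBrDr //; apply: ge_ereal_sup => _ [s [ss ls] <-].
rewrite leeBrDr // -EFinD; apply: ereal_sup_ubound.
exists (rcons s v); last by rewrite partition_sum_rcons ls.
split; last by rewrite last_rcons.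
by rewrite /= rcons_path; move: ss; rewrite /= => -> /=; rewrite ls.
Qed.

Lemma path_length_ge0 p a u : a <= u -> (0 <= path_length p a u)%E.
Proof.
move=> au.
have h : [set (partition_sum p a s)%:E | s in [set s | partition_of a u s]]
   (partition_sum p a [:: u])%:E by exists [:: u] => //; split => //=; rewrite andbT.
apply: le_trans (ereal_sup_ubound h).
by rewrite /partition_sum /= big_ord1 /= lee_fin mdist_ge0.
Qed.

Definition arclen p u := fine (path_length p 0 u).

Lemma arclenE p u : rectifiable p -> 0 <= u <= 1 -> path_length p 0 u = (arclen p u)%:E.
Proof.
move=> [_ fin] /andP[u0 u1]; rewrite /arclen fineK // ge0_fin_numE ?path_length_ge0 //.
apply: le_lt_trans fin; apply: le_trans (path_length_rcons p 0 u 1 u1).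
by apply: leeDl; rewrite lee_fin mdist_ge0.
Qed.

Lemma arclen_rcons {p u v} : rectifiable p -> 0 <= u -> u <= v -> v <= 1 ->
  arclen p u + mdist (p u) (p v) <= arclen p v.
Proof.
move=> rp u0 uv v1; have := path_length_rcons p 0 u v uv.
by rewrite (arclenE _ u rp) ?(arclenE _ v rp) -?EFinD ?lee_fin //; apply/andP; split; lra.
Qed.

Lemma arclen_mono {p u v} : rectifiable p -> 0 <= u -> u <= v -> v <= 1 ->
  arclen p u <= arclen p v.
Proof.
move=> rp u0 uv v1; apply: le_trans (arclen_rcons rp u0 uv v1).
by rewrite lerDl mdist_ge0.
Qed.

(* [partition_sum] recast on the full list of points, where reversal is easy. *)
Fixpoint chain_length p (l : seq R) : R :=
  match l with
  | x :: ((y :: _) as l') => mdist (p x) (p y) + chain_length p l'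
  | _ => 0
  end.

Lemma partition_sumE p a s : partition_sum p a s = chain_length p (a :: s).
Proof.
elim: s a => [|x s IH] a; first by rewrite /partition_sum big_ord0.
rewrite /partition_sum /= big_ord_recl /= -/(chain_length p (x :: s)) -IH.
congr (_ + _); apply: eq_bigr => i _ /=; rewrite /bump /=.
have hi := ltn_ord i.
by rewrite (set_nth_default x a) ?(set_nth_default x a (s := s)) //= ltnS ltnW.
Qed.

Lemma chain_length_rcons p x l y :
  chain_length p (rcons (x :: l) y) =
  chain_length p (x :: l) + mdist (p (last x l)) (p y).
Proof.
elim: l x => [|z l IH] x; first by rewrite /= addr0 add0r.
change (mdist (p x) (p z) + chain_length p (rcons (z :: l) y) =
  mdist (p x) (p z) + chain_length p (z :: l) + mdist (p (last z l)) (p y)).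
by rewrite IH addrA.
Qed.

Lemma chain_length_rev p l : chain_length p (rev l) = chain_length p l.
Proof.
elim: l => [//|x [//|y l] IH].
rewrite rev_cons.
case E : (rev (y :: l)) => [|w m]; first by move: E => /(congr1 size); rewrite size_rev.
have wy : last w m = y by have := congr1 (last w) E; rewrite rev_cons last_rcons.
rewrite E in IH; rewrite chain_length_rcons IH wy [RHS]/=.
by rewrite addrC metric_sym.
Qed.

Lemma chain_length_map p (g : R -> R) l :
  chain_length (p \o g) l = chain_length p (map g l).
Proof.
elim: l => [//|x [//|y l] IH].
change (mdist (p (g x)) (p (g y)) + chain_length (p \o g) (y :: l) =
  mdist (p (g x)) (p (g y)) + chain_length p (map g (y :: l))).
by rewrite IH.
Qed.

Lemma rectifiable_rev p : rectifiable p -> rectifiable (fun t => p (1 - t)).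
Proof.
move=> [cp fin]; split.
  by move: cp; rewrite set_itv_ccE => /continuous_onP/continuous_on_rev01/continuous_onP.
apply: le_lt_trans fin; apply: ge_ereal_sup => _ [s [ss ls] <-].
rewrite partition_sumE (chain_length_map p (fun t => 1 - t)).
case/lastP: s ss ls => [|s0 t] ss ls; first by move: ls => /= /eqP; rewrite eq_sym oner_eq0.
rewrite last_rcons in ls; subst t.
rewrite -rcons_cons map_rcons -chain_length_rev rev_rcons subrr -partition_sumE.
apply: ereal_sup_ubound; exists (rev (map (fun t => 1 - t) (0 :: s0))) => //; split.
  rewrite -rev_rcons rev_sorted.
  have -> : rcons [seq 1 - t | t <- 0 :: s0] 0 =
            map (fun t => 1 - t) (rcons (0 :: s0) 1) by rewrite map_rcons subrr.
  by apply: (homo_sorted (e := <=%R)) => // a b ab /=; rewrite lerD2l lerN2.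
by rewrite /= rev_cons last_rcons subr0.
Qed.

End ArcLength.

Section ContinuationProperty.
Context {R : realType} {X Y : metricType R} (f : X -> Y).

Lemma lower_scaling_expansion x a : 0 < a -> (a%:E <= lower_scaling f x)%E ->
  exists2 r, 0 < r & forall z, mdist z x < r -> a / 2 * mdist z x <= mdist (f z) (f x).
Proof.
move=> a0 ha.
have /ereal_sup_gt [_ [r r0 <-] hr] : ((a / 2)%:E < lower_scaling f x)%E.
  by apply: lt_le_trans ha; rewrite lte_fin; lra.
exists r => // z dz.
have [zx|zx] := eqVneq (mdist z x) 0; first by rewrite zx mulr0 mdist_ge0.
have dpos : 0 < mdist z x by rewrite lt_neqAle eq_sym zx mdist_ge0.
rewrite -ler_pdivlMr // -lee_fin; apply/ltW/(lt_le_trans hr).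
by apply: ereal_inf_lbound; exists z => //=; rewrite dpos dz.
Qed.

Lemma lift_dist_le_arclen {p : R -> Y} {q : R -> X} {b a} : rectifiable p ->
  continuous_on (Ico 0 b) q -> (forall t, 0 <= t < b -> f (q t) = p t) -> 0 < a ->
  (forall t, 0 <= t < b -> (a%:E <= lower_scaling f (q t))%E) -> b <= 1 ->
  forall s t, 0 <= s -> s <= t -> t < b ->
  a / 2 * mdist (q s) (q t) <= arclen p t - arclen p s.
Proof.
move=> rp cq hq a0 hl b1 s t s0 st tb.
have c0 : 0 < a / 2 by lra.
set c := a / 2 in c0 *.
pose P w := c * mdist (q s) (q w) <= arclen p w - arclen p s.
suff : forall w, s <= w <= t -> P w by apply; rewrite st lexx.
apply: real_induction => //.
- by rewrite /P mdistxx mulr0 subrr.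
- move=> u /andP[su ut] IH; apply/ler_addgt0Pr => eps eps0.
  have [d d0 Hd] := cq u ltac:(apply/andP; split; lra) (eps / c) (divr_gt0 eps0 c0).
  pose w := Num.max s (u - d / 2).
  have sw : s <= w by rewrite /w le_max lexx.
  have wu : w < u by rewrite /w gt_max su /=; lra.
  have uw : u - d / 2 <= w by rewrite /w le_max lexx orbT.
  have /ball_mdist quw : ball (q u) (eps / c) (q w).
    by apply: Hd; [apply/andP; split; lra | apply/ball_normR; rewrite ger0_norm; lra].
  have {}quw : c * mdist (q u) (q w) < eps.
    by move: quw; rewrite -(ltr_pM2l c0) mulrCA divff ?mulr1 // gt_eqF.
  have Lwu : arclen p w <= arclen p u by apply: arclen_mono => //; lra.
  have tri : c * mdist (q s) (q u) <= c * mdist (q s) (q w) + c * mdist (q u) (q w).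
    by rewrite -mulrDr ler_wpM2l ?(ltW c0) // (metric_sym (q u)) metric_triangle.
  have := IH w (introT andP (conj sw wu)); rewrite /P; lra.
- move=> u /andP[su ut] Pu.
  have [r r0 Hr] := lower_scaling_expansion _ _ a0 (hl u ltac:(apply/andP; split; lra)).
  have [d d0 Hd] := cq u ltac:(apply/andP; split; lra) r r0.
  exists d => // w /andP[uw wud] wt.
  have /ball_mdist quw : ball (q u) r (q w).
    by apply: Hd; [apply/andP; split; lra | apply/ball_normR; rewrite ler0_norm; lra].
  have hu : 0 <= u < b by apply/andP; split; lra.
  have hw : 0 <= w < b by apply/andP; split; lra.
  have expand : c * mdist (q w) (q u) <= mdist (p w) (p u).
    by rewrite -(hq w hw) -(hq u hu); apply: Hr; rewrite metric_sym.
  have Luw : arclen p u + mdist (p w) (p u) <= arclen p w.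
    by rewrite metric_sym; apply: arclen_rcons => //; lra.
  have tri : c * mdist (q s) (q w) <= c * mdist (q s) (q u) + c * mdist (q w) (q u).
    by rewrite -mulrDr ler_wpM2l ?(ltW c0) // (metric_sym (q w) (q u)) metric_triangle.
  rewrite /P in Pu *; lra.
Qed.

Definition seq_to_left (b : R) (n : nat) := b - b / n.+2%:R.

Lemma seq_to_left_itv b n : 0 < b -> 0 <= seq_to_left b n < b.
Proof.
move=> b0; have h : 0 < b / n.+2%:R by rewrite divr_gt0.
have : b / n.+2%:R <= b.
  by rewrite ler_pdivrMr ?ltr0n // ler_peMr ?(ltW b0) // (ler_nat R 1 n.+2).
rewrite /seq_to_left; move: h; set x := b / _ => h hx; apply/andP; split; lra.
Qed.

Lemma seq_to_left_nondecreasing {b} : 0 < b -> {homo seq_to_left b : m n / (m <= n)%N >-> m <= n}.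
Proof.
move=> b0 m n mn; rewrite /seq_to_left lerD2l lerN2 ler_pM2l // lef_pV2 ?posrE ?ltr0n //.
by rewrite ler_nat.
Qed.

Lemma seq_to_left_cvg b : 0 < b -> seq_to_left b @ \oo --> b.
Proof.
move=> b0; apply/cvgrPdist_lt => e e0.
exists (Num.Def.archi_bound (b / e)) => // n /= hn.
rewrite /seq_to_left opprB addrC subrK ger0_norm; last by rewrite ltW // divr_gt0.
rewrite ltr_pdivrMr ?ltr0n // -ltr_pdivrMl // mulrC.
apply: (lt_le_trans (archi_boundP (ltW (divr_gt0 b0 e0)))).
by rewrite ler_nat; apply: (leq_trans hn); rewrite -addn2 leq_addr.
Qed.

Lemma continuation_of_bounded_lifting (p : R -> Y) : complete_metric X -> rectifiable p ->
  bounded_path_lifting_property f p -> continuation_property f p.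
Proof.
move=> cX rp bpl b /andP[b0 b1] q cq hq.
have [a [a0 ha]] := bpl b (introT andP (conj b0 b1)) q cq hq.
have hl t : 0 <= t < b -> (a%:E <= lower_scaling f (q t))%E.
  move=> ht; apply: le_trans ha _; apply: ereal_inf_lbound.
  by exists (q t) => //; exists t => //; rewrite /= in_itv.
have {}cq : continuous_on (Ico 0 b) q by apply/continuous_onP; rewrite -set_itv_coE.
set tn := seq_to_left b.
have tb n : 0 <= tn n < b := seq_to_left_itv b n b0.
have tmono := seq_to_left_nondecreasing b0.
exists tn; split => //; split; first exact: seq_to_left_cvg.
have ke := lift_dist_le_arclen rp cq hq a0 hl b1.
have hL : cvgn (fun n => arclen p (tn n)).
  apply: nondecreasing_is_cvgn.
    by move=> m n mn; apply: arclen_mono => //; [case/andP: (tb m) | exact: tmono |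
      case/andP: (tb n) => _ h; lra].
  exists (arclen p 1) => _ [n _ <-].
  by apply: arclen_mono => //; case/andP: (tb n) => // _ h; lra.
apply: cX => e e0.
have ce0 : 0 < a / 2 * e / 2 by rewrite divr_gt0 // mulr_gt0 // divr_gt0.
have [N _ HN] := proj1 (cvgrPdist_lt _ _) hL _ ce0.
exists N => m n hm hn.
move: (HN m hm) (HN n hn) => {hm hn}; rewrite /= !ltr_norml.
set l := lim _ => hm' hn'.
rewrite -(ltr_pM2l (divr_gt0 a0 (ltr0n R 2))).
wlog mn : m n hm' hn' / (m <= n)%N.
  move=> W; have [/W|/ltnW/W] := leqP m n; first exact.
  by rewrite metric_sym; apply.
have := ke (tn m) (tn n) ltac:(by case/andP: (tb m)) (tmono _ _ mn) ltac:(by case/andP: (tb n)).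
lra.
Qed.

End ContinuationProperty.

Section Lifting.
Context {R : realType} {X Y : metricType R} (f : X -> Y).
Hypothesis cf : continuous f.
Hypothesis lh : local_homeomorphism f.

Definition local_section (W : set X) (Os : set Y) (g : Y -> X) :=
  [/\ continuous_on Os g, forall o, Os o -> f (g o) = o & forall z, W z -> g (f z) = z].

Lemma local_homeo_section x : exists W Os g,
  [/\ open W, W x, open Os, Os (f x) & local_section W Os g].
Proof.
have [W [oW [Wx [oO [_ [_ [_ [g [cg gf]]]]]]]]] := lh x.
exists W, (f @` W), g; split => //.
split; [exact/continuous_onP | by move=> _ [z Wz <-]; rewrite gf | exact: gf].
Qed.

Lemma local_homeo_injective x : exists2 r, 0 < r &
  forall z z', mdist x z < r -> mdist x z' < r -> f z = f z' -> z = z'.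
Proof.
have [W [/open_mdistP oW [Wx [_ [_ [_ [inj _]]]]]]] := lh x.
have [r r0 H] := oW x Wx.
by exists r => // z z' h1 h2 e; apply: inj => //; rewrite inE; exact: H.
Qed.

Lemma lift_unique {a c : R} {q1 q2 : R -> X} : a <= c ->
  continuous_on (Icc a c) q1 -> continuous_on (Icc a c) q2 ->
  (forall t, Icc a c t -> f (q1 t) = f (q2 t)) -> q1 a = q2 a ->
  forall t, Icc a c t -> q1 t = q2 t.
Proof.
move=> ac c1 c2 hf h0; apply: real_induction => // [u hu IH | u /andP[au uc] Pu].
  exact: (continuous_on_eq_left c1 c2 hu IH).
have hu : Icc a c u by apply/andP; split; lra.
have [r r0 Hr] := local_homeo_injective (q1 u).
have [d1 d10 H1] := c1 u hu _ r0.
have [d2 d20 H2] := c2 u hu _ r0.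
exists (Num.min d1 d2); first by rewrite lt_min d10 d20.
move=> w /andP[uw wud] wc.
have m1 : Num.min d1 d2 <= d1 by rewrite ge_min lexx.
have m2 : Num.min d1 d2 <= d2 by rewrite ge_min lexx orbT.
have hw : Icc a c w by apply/andP; split; lra.
have /ball_mdist b1 : ball (q1 u) r (q1 w).
  by apply: H1 => //; apply/ball_normR; rewrite ler0_norm; lra.
have /ball_mdist b2 : ball (q2 u) r (q2 w).
  by apply: H2 => //; apply/ball_normR; rewrite ler0_norm; lra.
by rewrite -Pu in b2; exact: Hr b1 b2 (hf w hw).
Qed.

Definition is_lift (p : R -> Y) (x0 : X) (c : R) (q : R -> X) :=
  [/\ continuous_on (Icc 0 c) q, q 0 = x0 & forall t, Icc 0 c t -> f (q t) = p t].

Lemma lift_in_section {p : R -> Y} {x0 q W Os g} {v w : R} :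
  local_section W Os g -> continuous_on (Icc 0 1) p -> is_lift p x0 1 q ->
  0 <= v -> v <= w -> w <= 1 -> (forall s, Icc v w s -> Os (p s)) -> W (q v) ->
  q w = g (p w).
Proof.
move=> [cg fg gf] cp [cq _ fq] v0 vw w1 Op Wqv.
have sub : Icc v w `<=` Icc 0 1 by move=> s /andP[? ?]; apply/andP; split; lra.
apply: (lift_unique vw (continuous_onS sub cq)
  (continuous_on_comp (continuous_onS sub cp) cg Op)).
- by move=> s hs /=; rewrite fg ?fq //; [exact: sub | exact: Op].
- by rewrite /= -fq ?gf //; apply/andP; split; lra.
- by apply/andP; split.
Qed.

Lemma is_lift_extend {p : R -> Y} {x0 ts q0 Os g} {u eta : R} :
  continuous_on (Icc 0 1) p -> 0 <= ts -> is_lift p x0 ts q0 ->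
  continuous_on Os g -> (forall o, Os o -> f (g o) = o) -> g (p ts) = q0 ts ->
  u - eta < ts -> (forall t, Icc 0 1 t -> `|u - t| < eta -> Os (p t)) ->
  forall w, ts <= w < u + eta -> w <= 1 -> exists q, is_lift p x0 w q.
Proof.
move=> cp ts0 [c0 v0 f0] cg fg gts uts Op w /andP[tsw wu] w1.
have Op' : forall t, Icc ts w t -> Os (p t).
  by move=> t /andP[? ?]; apply: Op; [apply/andP; split | rewrite ltr_norml]; lra.
have sub : Icc ts w `<=` Icc 0 1 by move=> t /andP[? ?]; apply/andP; split; lra.
exists (fun t => if t <= ts then q0 t else g (p t)); split.
- apply: continuous_on_glue => //.
  exact: continuous_on_comp (continuous_onS sub cp) cg Op'.
- by rewrite ts0.
- move=> t /andP[t0 tw]; case: ifP => h; first by apply: f0; apply/andP; split.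
  by apply: fg; apply: Op'; apply/andP; split => //; rewrite ltW // ltNge h.
Qed.

Lemma lift_below (p : R -> Y) x0 (u : R) :
  (forall w, 0 <= w < u -> exists q, is_lift p x0 w q) ->
  exists Q, forall w, 0 <= w < u -> is_lift p x0 w Q.
Proof.
move=> IH.
have /choice [L HL] : forall w, exists q, 0 <= w < u -> is_lift p x0 w q.
  move=> w; have [/IH [q hq]|_] := boolP (0 <= w < u); first by exists q.
  by exists (fun=> x0).
exists (fun t => L t t) => w hw.
have [cw v0 fw] := HL w hw.
have agree : forall t, Icc 0 w t -> L t t = L w t.
  move=> t /andP[t0 tw]; have [ct vt ft] := HL t ltac:(apply/andP; split; lra).
  have sub : Icc 0 t `<=` Icc 0 w by move=> y /andP[? ?]; apply/andP; split; lra.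
  apply: (lift_unique t0 ct (continuous_onS sub cw)); last by apply/andP; split.
    by move=> y hy; rewrite ft // fw //; exact: sub.
  by rewrite vt v0.
split.
- by apply: continuous_on_ext cw => t /agree.
- by rewrite agree //; apply/andP; split; [|case/andP: hw].
- by move=> t ht; rewrite agree // fw.
Qed.

(* At a left limit point u the continuation property yields a limit point [xl]
   of the lift over [p u]; a local section at [xl] extends the lift up to [u]. *)
Lemma lift_at_left_limit (p : R -> Y) x0 (u : R) :
  continuous_on (Icc 0 1) p -> continuation_property f p -> 0 < u <= 1 ->
  (forall w, 0 <= w < u -> exists q, is_lift p x0 w q) -> exists q, is_lift p x0 u q.
Proof.
move=> cp CP /andP[u0 u1] /lift_below [Q HQ].
have liftQ t : 0 <= t < u -> f (Q t) = p t.
  by move=> ht; have [_ _ fQ] := HQ t ht; apply: fQ; apply/andP; split; [case/andP: ht|].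
have cQ : {within `[0, u[, continuous Q}.
  by rewrite set_itv_coE; apply/continuous_onP/continuous_on_Ico => w /HQ [].
have [tn [htn [tcv [xl hxl]]]] := CP u (introT andP (conj u0 u1)) Q cQ liftQ.
have hu : Icc 0 1 u by apply/andP; split; lra.
have fxl : f xl = p u.
  have to_fxl : (p \o tn) @ \oo --> f xl.
    have -> : p \o tn = f \o (Q \o tn) by apply/funext => n /=; rewrite liftQ.
    by apply: cvg_comp hxl _; exact: cf.
  have to_pu : (p \o tn) @ \oo --> p u.
    apply/cvg_ballP => e e0; have [d d0 Hd] := cp u hu e e0.
    have [N _ HN] := proj1 (cvg_ballP _ _) tcv _ d0.
    exists N => // n hn; apply: Hd; last exact: HN.
    by have /andP[? ?] := htn n; apply/andP; split; lra.
  exact: (cvg_unique (@metric_hausdorff R Y) to_fxl to_pu).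
have [W [Os [g [/open_mdistP oW Wxl oO Oxl [cg fg gf]]]]] := local_homeo_section xl.
rewrite fxl in Oxl.
have [eta eta0 Heta] := continuous_on_nbhs cp hu oO Oxl.
have [rho rho0 Hrho] := oW xl Wxl.
have [N1 _ HN1] := proj1 (cvg_ballP _ _) tcv _ eta0.
have [N2 _ HN2] := proj1 (cvg_ballP _ _) hxl _ rho0.
pose n := maxn N1 N2.
have /ball_normR tn_eta := HN1 n (leq_maxl _ _).
have /ball_mdist Qtn_rho := HN2 n (leq_maxr _ _).
have /andP[tn0 tnu] := htn n.
apply: (is_lift_extend (u := u) (eta := eta) cp tn0 (HQ _ (htn n)) cg fg _ _ _ u _ u1).
- by rewrite -liftQ ?tn0 // gf //; exact: Hrho.
- by move: tn_eta; rewrite ltr_norml; lra.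
- by move=> t ht /ball_normR; exact: Heta.
- by apply/andP; split; lra.
Qed.

Lemma lift_exists (p : R -> Y) x0 : rectifiable p -> continuation_property f p ->
  f x0 = p 0 -> exists q, is_lift p x0 1 q.
Proof.
move=> [+ _] CP fx0; rewrite set_itv_ccE => /continuous_onP cp.
suff : forall w, 0 <= w <= 1 -> exists q, is_lift p x0 w q by apply; rewrite ler01 lexx.
apply: real_induction; first exact: ler01.
- exists (fun=> x0); split => //; first exact: continuous_on_cst.
  by move=> t /andP[t0 t0']; have -> : t = 0 by apply/eqP; rewrite eq_le t0 t0'.
- by move=> u hu; exact: lift_at_left_limit.
- move=> u /andP[u0 u1] [q lq].
  have [_ _ fq] := lq.
  have hu : Icc 0 1 u by apply/andP; split; lra.
  have fqu : f (q u) = p u by apply: fq; apply/andP; split.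
  have [W [Os [g [_ Wqu oO Oqu [cg fg gf]]]]] := local_homeo_section (q u).
  rewrite fqu in Oqu.
  have [eta eta0 Heta] := continuous_on_nbhs cp hu oO Oqu.
  exists eta => // w /andP[uw wue] w1.
  apply: (is_lift_extend (u := u) (eta := eta) cp u0 lq cg fg _ _ _ w _ w1).
  + by rewrite -fqu gf.
  + lra.
  + by move=> t ht /ball_normR; exact: Heta.
  + by apply/andP; split; lra.
Qed.



Lemma lift_unique_start (p : R -> Y) x x' q1 q2 :
  is_lift p x 1 q1 -> is_lift p x' 1 q2 -> q1 1 = q2 1 -> x = x'.
Proof.
move=> [c1 v1 f1] [c2 v2 f2] e1.
have := lift_unique ler01 (continuous_on_rev01 c1) (continuous_on_rev01 c2) _ _ 1.
rewrite /= subrr v1 v2; apply; last by rewrite /Icc /= ler01 lexx.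
  by move=> t /andP[t0 t1]; rewrite f1 ?f2 //; apply/andP; split; lra.
by rewrite subr0.
Qed.

Definition lift (p : R -> Y) (x : X) : R -> X :=
  if pselect (exists q, is_lift p x 1 q) is left h then projT1 (cid h) else fun=> x.

Lemma liftP p x : (exists q, is_lift p x 1 q) -> is_lift p x 1 (lift p x).
Proof. by rewrite /lift; case: pselect => // h _; exact: projT2 (cid h). Qed.

Section Covering.
Hypothesis CP : forall p : R -> Y, rectifiable p -> continuation_property f p.

Section Sheets.
Variables (y0 : Y) (U : set Y) (H : Y * R -> Y).
Hypotheses (oU : open U) (cH : {within U `*` `[0, 1], continuous H})
  (H0 : forall y, U y -> H (y, 0) = y0) (H1 : forall y, U y -> H (y, 1) = y)
  (Hrect : forall y, U y -> rectifiable (fun t => H (y, t))).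

Definition sheet_lift x y := lift (fun t => H (y, t)) x.

Lemma continuous_on_contraction : continuous_on (U `*` Icc 0 1) H.
Proof. by apply/continuous_onP; rewrite -set_itv_ccE. Qed.

Lemma continuous_on_contraction_path {y} : U y -> continuous_on (Icc 0 1) (fun t => H (y, t)).
Proof. by move=> /Hrect[]; rewrite set_itv_ccE => /continuous_onP. Qed.

Lemma sheet_liftP {x y} : f x = y0 -> U y -> is_lift (fun t => H (y, t)) x 1 (sheet_lift x y).
Proof.
move=> fx Uy; apply: liftP; apply: (lift_exists _ _ (Hrect _ Uy) (CP _ (Hrect _ Uy))).
by rewrite H0.
Qed.

Lemma sheet_lift_end {x y} : f x = y0 -> U y -> f (sheet_lift x y 1) = y.
Proof.
move=> fx Uy; have [_ _ fq] := sheet_liftP fx Uy.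
by rewrite fq ?H1 //; apply/andP; split; [exact: ler01|].
Qed.

(* Near a time u, every lift [sheet_lift x y] with y close to y1 stays in one
   local section of f, so its continuity in y propagates along that time window. *)
Lemma sheet_lift_window {x y1 u} : f x = y0 -> U y1 -> Icc 0 1 u ->
  exists2 eta, 0 < eta & forall v w, 0 <= v -> v <= w -> w <= 1 ->
    `|u - v| < eta -> `|u - w| < eta ->
    continuous_within_at U (fun y => sheet_lift x y v) y1 ->
    continuous_within_at U (fun y => sheet_lift x y w) y1.
Proof.
move=> fx Uy1 hu; have [c1 _ f1] := sheet_liftP fx Uy1.
have [W [Os [g [/open_mdistP oW Wq1u oO Oq1u sec]]]] := local_homeo_section (sheet_lift x y1 u).
have [cg _ gf] := sec; rewrite f1 // in Oq1u.
have [e1 e10 He1] := continuous_on_nbhs continuous_on_contraction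
  (conj Uy1 hu : (U `*` Icc 0 1) (y1, u)) oO Oq1u.
have [rho rho0 Hrho] := oW _ Wq1u.
have [e2 e20 He2] := c1 u hu rho rho0.
exists (Num.min e1 e2) => [|v w v0 vw w1 uv uw Pv eps eps0]; first by rewrite lt_min e10 e20.
have m1 : Num.min e1 e2 <= e1 by rewrite ge_min lexx.
have m2 : Num.min e1 e2 <= e2 by rewrite ge_min lexx orbT.
have hw : Icc 0 1 w by apply/andP; split; lra.
have inW s : Icc 0 1 s -> `|u - s| < Num.min e1 e2 -> W (sheet_lift x y1 s).
  by move=> hs us; apply: Hrho; apply/ball_mdist; apply: He2 => //; apply/ball_normR; lra.
have inO y s : U y -> ball y1 e1 y -> Icc 0 1 s -> `|u - s| < Num.min e1 e2 -> Os (H (y, s)).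
  by move=> Uy by1 hs us; apply: He1; split => //; apply/ball_normR; lra.
have [rho2 rho20 Hrho2] := oW _ (inW v ltac:(apply/andP; split; lra) uv).
have [d1 d10 Hd1] := Pv rho2 rho20.
have Gw y : U y -> ball y1 e1 y -> ball y1 d1 y -> sheet_lift x y w = g (H (y, w)).
  move=> Uy by1 byd1; apply: (lift_in_section sec (continuous_on_contraction_path Uy)
    (sheet_liftP fx Uy) v0 vw w1); last by apply: Hrho2; apply/ball_mdist; exact: Hd1.
  move=> s /andP[vs sw]; apply: inO => //; first by apply/andP; split; lra.
  by move: uv uw; rewrite !ltr_norml; lra.
have [k k0 Hk] := cg _ (inO y1 w Uy1 (ballxx _ e10) hw uw) eps eps0.
have [d2 d20 Hd2] := continuous_on_contraction (y1, w) (conj Uy1 hw) k k0.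
exists (Num.min e1 (Num.min d1 d2)) => [|y Uy byd]; first by rewrite !lt_min e10 d10 d20.
have by1 : ball y1 e1 y by apply: le_ball byd; rewrite ge_min lexx.
have by2 : ball y1 d1 y by apply: le_ball byd; rewrite !ge_min lexx orbT.
have by3 : ball y1 d2 y by apply: le_ball byd; rewrite !ge_min lexx !orbT.
have q1w : sheet_lift x y1 w = g (H (y1, w)) by rewrite -(f1 w hw) gf //; apply: inW.
rewrite /= q1w Gw //.
by apply: Hk; [exact: inO | apply: Hd2; [split | split => //; exact: ballxx]].
Qed.

Lemma sheet_lift_continuous {x} : f x = y0 -> continuous_on U (fun y => sheet_lift x y 1).
Proof.
move=> fx y1 Uy1.
suff : forall w, 0 <= w <= 1 -> continuous_within_at U (fun y => sheet_lift x y w) y1.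
  by apply; rewrite ler01 lexx.
apply: real_induction; first exact: ler01.
- move=> e e0; exists 1 => // y Uy _.
  by have [_ -> _] := sheet_liftP fx Uy1; have [_ -> _] := sheet_liftP fx Uy; exact: ballxx.
- move=> u /andP[u0 u1] IH.
  have [eta eta0 Hwin] := sheet_lift_window fx Uy1 (introT andP (conj (ltW u0) u1)).
  pose v := Num.max 0 (u - eta / 2).
  have v0 : 0 <= v by rewrite le_max lexx.
  have vu : v < u by rewrite gt_max u0 /=; lra.
  have uv : u - eta / 2 <= v by rewrite le_max lexx orbT.
  apply: (Hwin v u v0 (ltW vu) u1); last by apply: IH; rewrite v0 vu.
    by rewrite ger0_norm; lra.
  by rewrite subrr normr0.
- move=> u /andP[u0 u1] Pu.
  have [eta eta0 Hwin] := sheet_lift_window fx Uy1 (introT andP (conj u0 (ltW u1))).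
  exists eta => // w /andP[uw wue] w1.
  apply: (Hwin u w u0 (ltW uw) w1 _ _ Pu); first by rewrite subrr normr0.
  by rewrite ler0_norm; lra.
Qed.

Definition sheet x := (fun y => sheet_lift x y 1) @` U.

Lemma sheet_open x : f x = y0 -> open (sheet x).
Proof.
move=> fx; apply/open_mdistP => _ [y1 Uy1 <-].
set z0 := sheet_lift x y1 1.
have fz0 : f z0 = y1 by exact: sheet_lift_end.
have [rho rho0 Hinj] := local_homeo_injective z0.
have [k k0 Hk] := sheet_lift_continuous fx y1 Uy1 rho rho0.
have [rU rU0 HrU] := (open_mdistP U).1 oU y1 Uy1.
have cf' : continuous_on setT f by apply/continuous_onP; exact: continuous_subspaceT.
have [dl dl0 Hdl] := cf' z0 I _ (ltac:(by rewrite lt_min k0 rU0) : 0 < Num.min k rU).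
exists (Num.min dl rho); first by rewrite lt_min dl0 rho0.
move=> z; rewrite lt_min => /andP[dz1 dz2].
have /ball_mdist := Hdl z I ((ball_mdist _ _ _).2 dz1).
rewrite fz0 lt_min => /andP[h1 h2].
have Ufz : U (f z) by exact: HrU.
have /ball_mdist hG := Hk (f z) Ufz ((ball_mdist _ _ _).2 h1).
by exists (f z) => //; apply: Hinj hG dz2 _; rewrite sheet_lift_end.
Qed.

Lemma sheet_homeo x : f x = y0 -> homeo_onto f (sheet x) U.
Proof.
move=> fx; split; [|split; [|split]].
- apply/seteqP; split => [_ [_ [y Uy <-] <-]| y Uy]; first by rewrite sheet_lift_end.
  by exists (sheet_lift x y 1); [exists y | rewrite sheet_lift_end].
- exact: continuous_subspaceT.
- move=> z z'; rewrite !inE => -[y Uy <-] [y' Uy' <-] e.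
  by rewrite !sheet_lift_end // in e; rewrite e.
- exists (fun y => sheet_lift x y 1); split; first exact/continuous_onP/sheet_lift_continuous.
  by move=> _ [y Uy <-]; rewrite sheet_lift_end.
Qed.

Lemma sheets_disjoint {x x' z} : f x = y0 -> f x' = y0 -> sheet x z -> sheet x' z -> x = x'.
Proof.
move=> fx fx' [y Uy <-] [y' Uy' e].
have yy' : y' = y by rewrite -(sheet_lift_end fx' Uy') e sheet_lift_end.
subst y'; exact: lift_unique_start (sheet_liftP fx Uy) (sheet_liftP fx' Uy) (esym e).
Qed.

(* The sheet through z is found by lifting the contraction path of f z
   backwards from z. *)
Lemma preimage_sheet z : U (f z) -> exists2 x, f x = y0 & sheet x z.
Proof.
move=> Ufz; set y := f z in Ufz *.
have rr := rectifiable_rev _ (Hrect _ Ufz).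
have [q [cq vq fq]] := lift_exists _ z rr (CP _ rr) ltac:(by rewrite /= subr0 H1).
have hq1 : Icc 0 1 (1 : R) by rewrite /Icc /= ler01 lexx.
have fq1 : f (q 1) = y0 by rewrite fq //= subrr H0.
have [c2 v2 f2] := sheet_liftP fq1 Ufz.
exists (q 1) => //; exists y => //.
have := lift_unique ler01 c2 (continuous_on_rev01 cq) _ _ 1 hq1.
rewrite /= subrr vq; apply; last by rewrite v2 subr0.
move=> t /andP[t0 t1]; rewrite f2 ?fq /=; try by apply/andP; split; lra.
by rewrite opprB addrC subrK.
Qed.

Lemma evenly_covered_by_contraction : evenly_covered f U.
Proof.
exists [set sheet x | x in f @^-1` [set y0]]; split; [|split].
- by move=> _ [x fx <-]; split; [exact: sheet_open | exact: sheet_homeo].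
- move=> _ _ [x fx <-] [x' fx' <-] neq; apply/seteqP; split => // z [hz hz'].
  by apply: neq; rewrite (sheets_disjoint fx fx' hz hz').
- apply/seteqP; split => [z /preimage_sheet [x fx hz] | z [_ [x fx <-] hz]].
    by exists (sheet x) => //; exists x.
  by have [y Uy <-] := hz; rewrite /preimage /= sheet_lift_end.
Qed.

End Sheets.
End Covering.
End Lifting.

(* [no_isolated_points X] only serves to make D_x^- f meaningful, and the
   definition of a covering projection used here does not ask for surjectivity. *)
Theorem theorem4 (R : realType) (X Y : metricType R) (f : X -> Y) :
  continuous f -> complete_metric X -> no_isolated_points X ->
  (forall p : R -> Y, rectifiable p -> bounded_path_lifting_property f p) ->
  (forall p : R -> Y, rectifiable p -> continuation_property f p) /\
  (path_connected_space Y -> locally_R_contractible Y -> local_homeomorphism f ->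
     covering_projection f).
Proof.
move=> cf cX _ bpl.
have CP p : rectifiable p -> continuation_property f p.
  by move=> rp; exact: continuation_of_bounded_lifting cX rp (bpl p rp).
split => // _ contractible lhf; split => // y0.
have [U [oU [Uy0 [H [cH [_ [_ [H0 [H1 Hrect]]]]]]]]] := contractible y0.
exists U; split => //; split => //.
exact: (evenly_covered_by_contraction f cf lhf CP y0 U H oU cH H0 H1 Hrect).
Qed.
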